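(* Let $M(1)^+_m$ denote the weight-$m$ subspace of $M(1)^+$. Then $M(1)^+_{10}$ (which has dimension 22) is spanned by the vectors in $$L(-1)M(1)^+_9,\qquad L(-3)M(1)^+_7,\qquad (h(-1)^4\mathbf 1)_{-3}\,h(-1)^4\mathbf 1,\qquad L(-2)^5\mathbf 1.$$
   Context: Let $\mathfrak h=\mathbb C h$ with $\langle h,h\rangle=1$, Heisenberg algebra $[h(m),h(n)]=m\delta_{m+n,0}$. Let $M(1)=\mathbb C[h(-1),h(-2),\dots]\mathbf 1$ be the Heisenberg vertex operator algebra of central charge 1 (vacuum $\mathbf 1$, $Y(h(-1)\mathbf 1,z)=\sum_nh(n)z^{-n-1}$, $Y(h(-n_1)\cdots h(-n_k)\mathbf 1,z)={:}\partial_z^{(n_1-1)}h(z)\cdots\partial_z^{(n_k-1)}h(z){:}$), with conformal vector $\omega=\frac12h(-1)^2\mathbf 1$, $Y(\omega,z)=\sum_nL(n)z^{-n-2}$, and weight of $h(-n_1)\cdots h(-n_k)\mathbf 1$ equal to $\sum n_i$. For $u\in M(1)$, $Y(u,z)=\sum_nu_nz^{-n-1}$. Let $\theta$ act by $(-1)^k$ on monomials of length $k$ and $M(1)^+$ be its fixed-point subalgebra (spanned by monomials of even length). *)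

(* The Heisenberg VOA M(1) of rank one, modelled as the
   commutative polynomial algebra C[x_0, x_1, x_2, ...] in countably many
   variables (multinomials' monoid algebra over commutative monomials
   {cmonom nat}); the variable x_i stands for h(-(i+1)), and the vacuum is 1. *)
From HB Require Import structures.
From mathcomp Require Import all_boot all_order all_algebra.
From mathcomp Require Import finmap.
From mathcomp Require Import monalg.

Set Implicit Arguments.
Unset Strict Implicit.
Unset Printing Implicit Defensive.

Import Order.TTheory GRing.Theory Num.Theory.
Local Open Scope ring_scope.

Section Heisenberg.
Variable C : numClosedFieldType.

Definition M1 := {malg C[{cmonom nat}]}.

Definition vac : M1 := 1.

(* h(-n) 1  (n >= 1), i.e. the variable x_(n-1) *)
Definition hv (n : nat) : M1 := << ucm (n.-1 : nat) >>.

Definition wtm (k : {cmonom nat}) : nat :=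
  (\sum_(i <- finsupp k) k i * i.+1)%N.

Definition lenm (k : {cmonom nat}) : nat := mdeg k.

Definition wtb (v : M1) : nat := (\max_(k <- msupp v) wtm k)%N.

Definition dx (i : nat) (v : M1) : M1 :=
  mmap (fun c : C => c%:MP)
       (fun k : {cmonom nat} => (k i)%:R *: << divcm k (ucm i) >>) v.

(* action of the Heisenberg mode h(m) on M(1):
   h(-n) = multiplication by h(-n) (n > 0),
   h(n) = n d/dh(-n) (n > 0), h(0) = 0 (zero momentum). *)
Definition hmode (m : int) (v : M1) : M1 :=
  if (m < 0)%R then hv `|m|%N * v
  else if m == 0 then 0
  else m%:~R *: dx (`|m|%N).-1 v.

(* normally ordered product :h(m_1) ... h(m_r): applied to v
   (annihilation modes act first, creation modes are multiplications) *)
Fixpoint NO (ms : seq int) (v : M1) : M1 :=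
  match ms with
  | [::] => v
  | m :: ms' =>
      if (m < 0)%R then hmode m (NO ms' v)
      else if m == 0 then 0
      else NO ms' (hmode m v)
  end.

Definition rangeZ (B : nat) : seq int :=
  [seq (i%:Z - B%:Z)%R | i <- iota 0 (B.*2.+1)].

Fixpoint tuplesZ (B : nat) (r : nat) : seq (seq int) :=
  match r with
  | 0 => [:: [::]]
  | r'.+1 => [seq m :: t | m <- rangeZ B, t <- tuplesZ B r']
  end.

Definition binomZ (a : int) (j : nat) : C :=
  (\prod_(i < j) (a - i%:Z)%:~R) / (j`!)%:R.

(* Modes of Y(u, z) = sum_n u_n z^(-n-1) for the monomial
   u = h(-n_1) ... h(-n_r) 1 (ns = [:: n_1; ...; n_r], all n_i >= 1):
   Y(u,z) = :d^(n_1-1) h(z) ... d^(n_r-1) h(z):, with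
   d^(j) h(z) = sum_m binom(-m-1, j) h(m) z^(-m-1-j), so that
   u_n = sum_{m_1+...+m_r = n+1-(n_1+...+n_r)}
            prod_i binom(-m_i-1, n_i-1) :h(m_1)...h(m_r):.
   Applied to v, all terms with some |m_i| > wtb v + |n| + sum n_i + 1
   vanish (annihilation modes of total degree > wtb v kill v, and the
   creation modes are then bounded by the constraint on the sum), so the
   infinite sum is the finite sum below. *)
Definition Ymono (ns : seq nat) (n : int) (v : M1) : M1 :=
  let B := (wtb v + `|n| + sumn ns + 1)%N in
  \sum_(ms <- tuplesZ B (size ns) | \sum_(m <- ms) m == n + 1 - (sumn ns)%:Z)
     (\prod_(p <- zip ms ns) binomZ (- p.1 - 1) (p.2.-1)) *: NO ms v.

(* Virasoro operators: Y(omega, z) = sum_n L(n) z^(-n-2) with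
   omega = 1/2 h(-1)^2 1, i.e. L(n) = omega_(n+1). *)
Definition Lop (n : int) (v : M1) : M1 :=
  (2%:R : C)^-1 *: Ymono [:: 1%N; 1%N] (n + 1) v.

Definition L2pow5vac : M1 := iter 5 (Lop (-2)) vac.

Definition h1pow4 : M1 := hv 1 ^+ 4.

Definition inMplus (m : nat) (v : M1) : Prop :=
  forall k, k \in msupp v -> wtm k = m /\ ~~ odd (lenm k).

Definition in_span (S : M1 -> Prop) (v : M1) : Prop :=
  exists s : seq (C * M1),
    (forall p, p \in s -> S p.2) /\ v = \sum_(p <- s) p.1 *: p.2.

Definition gens10 (v : M1) : Prop :=
  (exists w, inMplus 9 w /\ v = Lop (-1) w) \/
  (exists w, inMplus 7 w /\ v = Lop (-3) w) \/
  v = Ymono [:: 1%N; 1%N; 1%N; 1%N] (-3) h1pow4 \/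
  v = L2pow5vac.

End Heisenberg.

(* In the monomial basis of M(1) = C[h(-1), h(-2), ...] 1, the space M(1)^+_10
   has as a basis the 22 monomials of weight 10 and even length.  The modes of
   Y(h(-1)^k 1, z), and hence L(n) = 1/2 (h(-1)^2 1)_(n+1), act on integer
   combinations of monomials by explicit integer formulas, so they can be
   evaluated in the kernel.  For each of the 22 monomials a certificate row
   gives a nonzero multiple of it as an integer combination of the listed
   generators, and the kernel checks each of these identities by computation.
   Conversely, L(n) and the modes of Y preserve the length parity and shift the
   weight by the mode index, so the generators lie in M(1)^+_10. *)

From Stdlib Require Import ZArith.
From HB Require Import structures.
From mathcomp Require Import all_boot all_order all_algebra.
From mathcomp Require Import finmap.
From mathcomp Require Import monalg.
From mathcomp Require Import zify ssrZ.
(* Give back [%N] to [nat] (taken by [BinNat.N]) and [%Z] to [Z] (taken by [int]). *)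
Delimit Scope nat_scope with N.
Delimit Scope Z_scope with Z.
Import GRing.Theory Num.Theory.
Local Open Scope ring_scope.

Set Implicit Arguments.
Unset Strict Implicit.
Unset Printing Implicit Defensive.

Section CommutativeMonomials.
Local Open Scope fset_scope.

Lemma expcmnE (m : {cmonom nat}) a i : expcmn m a i = (m i * a)%N.
Proof.
case: a => [|a]; first by rewrite /expcmn /= onecmE muln0.
rewrite /expcmn iteropS; elim: a => [|a IH]; first by rewrite /= muln1.
by rewrite iterS mulcmE IH !mulnS.
Qed.

Lemma wtm_subset (k : {cmonom nat}) (d : {fset nat}) : finsupp k `<=` d ->
  wtm k = (\sum_(i <- d) k i * i.+1)%N.
Proof.
move=> le; rewrite /wtm (big_fset_incl _ le) //.
by move=> i _; rewrite -cmE_neq0 negbK => /eqP ->.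
Qed.

Lemma wtmM (a b : {cmonom nat}) : wtm (mulcm a b) = (wtm a + wtm b)%N.
Proof.
rewrite (@wtm_subset _ (finsupp a `|` finsupp b)); last first.
  by rewrite (_ : mulcm a b = @mmul _ a b) // mdomD.
rewrite (wtm_subset (fsubsetUl _ (finsupp b))) (wtm_subset (fsubsetUr (finsupp a) _)).
by rewrite -big_split /=; apply/eq_bigr=> /= i _; rewrite mulcmE mulnDl.
Qed.

Lemma wtm1 : wtm (onecm nat) = 0%N.
Proof. by rewrite /wtm (_ : onecm nat = @mone _) // mdom1 big_seq_fset0. Qed.

Lemma wtmU i : wtm (ucm i) = i.+1.
Proof. by rewrite /wtm mdomU big_seq_fset1 ucmE eqxx mul1n. Qed.

Lemma wtmX m a : wtm (expcmn m a) = (wtm m * a)%N.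
Proof.
case: a => [|a]; first by rewrite /expcmn /= wtm1 muln0.
rewrite /expcmn iteropS; elim: a => [|a IH]; first by rewrite /= muln1.
by rewrite iterS wtmM IH !mulnS.
Qed.

Lemma wtm_ge (k : {cmonom nat}) i : (k i * i.+1 <= wtm k)%N.
Proof.
have [->//|pos] := posnP (k i).
have iin : i \in finsupp k by rewrite -cmE_neq0 -lt0n.
by rewrite /wtm (bigD1_seq i iin (fset_uniq _)) /= leq_addr.
Qed.

Lemma lenmM (a b : {cmonom nat}) : lenm (mulcm a b) = (lenm a + lenm b)%N.
Proof. exact: (@mdegM nat a b). Qed.

Lemma lenm1 : lenm (onecm nat) = 0%N.
Proof. exact: (@mdeg1 nat). Qed.

Lemma lenmU i : lenm (ucm i) = 1%N.
Proof. exact: mdegU. Qed.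

Lemma lenmX m a : lenm (expcmn m a) = (lenm m * a)%N.
Proof.
case: a => [|a]; first by rewrite /expcmn /= lenm1 muln0.
rewrite /expcmn iteropS; elim: a => [|a IH]; first by rewrite /= muln1.
by rewrite iterS lenmM IH !mulnS.
Qed.

Lemma divcm_ucmK (k : {cmonom nat}) i : (0 < k i)%N ->
  mulcm (ucm i) (divcm k (ucm i)) = k.
Proof.
move=> pos; apply/eqP/cmP => j; rewrite mulcmE divcmE ucmE.
by case: eqP => [<-|_]; [rewrite add1n subn1 prednK | rewrite subn0].
Qed.

End CommutativeMonomials.

(* An exponent sequence [e] encodes the monomial [x_0^(e_0) x_1^(e_1) ...]; it
   is canonical when it has no trailing zero, i.e. when [last 1 e != 0]. *)
Section ExponentSequences.

Fixpoint mono_from (j : nat) (e : seq nat) : {cmonom nat} :=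
  match e with
  | [::] => onecm nat
  | a :: e' => mulcm (expcmn (ucm j) a) (mono_from j.+1 e')
  end.
Definition mono e := mono_from 0 e.

Fixpoint wt_from (j : nat) (e : seq nat) : nat :=
  match e with [::] => 0%N | a :: e' => (a * j.+1 + wt_from j.+1 e')%N end.
Definition wt e := wt_from 0 e.

Lemma mono_fromE j e i :
  mono_from j e i = if (i < j)%N then 0%N else nth 0%N e (i - j).
Proof.
elim: e j => [|a e IH] j /=.
  by rewrite onecmE; case: ifP => // _; rewrite nth_nil.
rewrite mulcmE expcmnE ucmE IH eq_sym.
case: (ltngtP i j) => [lt|gt|->].
- by rewrite ltnS (ltnW lt).
- by rewrite ltnS leqNgt gt /= -(subnSK gt).
- by rewrite ltnSn subnn /= mul1n addn0.
Qed.

Lemma monoE e i : mono e i = nth 0%N e i.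
Proof. by rewrite /mono mono_fromE subn0. Qed.

Lemma wtm_mono e : wtm (mono e) = wt e.
Proof.
rewrite /mono /wt; elim: e 0%N => [|a e IH] j /=; first exact: wtm1.
by rewrite wtmM wtmX wtmU IH mulnC.
Qed.

Lemma lenm_mono e : lenm (mono e) = sumn e.
Proof.
rewrite /mono; elim: e 0%N => [|a e IH] j /=; first exact: lenm1.
by rewrite lenmM lenmX lenmU IH mul1n.
Qed.

Lemma mono_inj e e' : last 1%N e != 0%N -> last 1%N e' != 0%N ->
  mono e = mono e' -> e = e'.
Proof.
move=> he he' eq.
have nth_eq i : nth 0%N e i = nth 0%N e' i by rewrite -!monoE eq.
have size_le (a b : seq nat) : last 1%N b != 0%N ->
    (forall i, nth 0%N a i = nth 0%N b i) -> (size b <= size a)%N.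
  case: b => [|x b] //= hb hab; rewrite leqNgt; apply/negP => lt.
  move: (hab (size b)); rewrite nth_default; last by rewrite -ltnS.
  by move=> /esym h0; move: hb; rewrite /= (last_nth 0%N) ?h0.
apply: (@eq_from_nth _ 0%N); last by move=> i _; exact: nth_eq.
by apply/eqP; rewrite eqn_leq (size_le _ _ he' nth_eq) (size_le _ _ he).
Qed.

Fixpoint strip (e : seq nat) : seq nat :=
  match e with
  | [::] => [::]
  | a :: e' => let s := strip e' in
               if (a == 0%N) && (s == [::]) then [::] else a :: s
  end.

Lemma nth_strip e i : nth 0%N (strip e) i = nth 0%N e i.
Proof.
elim: e i => [|a e IH] i //=.
case: ifP => [/andP[/eqP -> /eqP s0]|_]; last by case: i.
by case: i => [|i] //=; rewrite -IH s0 nth_nil.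
Qed.

Lemma mono_strip e : mono (strip e) = mono e.
Proof. by apply/eqP/cmP => i; rewrite !monoE nth_strip. Qed.

Lemma mono_incr_nth e i : mono (incr_nth e i) = mulcm (ucm i) (mono e).
Proof. by apply/eqP/cmP => j; rewrite mulcmE monoE ucmE nth_incr_nth monoE. Qed.

Definition decr_nth (e : seq nat) (i : nat) :=
  strip (set_nth 0%N e i (nth 0%N e i).-1).

Lemma mono_decr_nth e i : (0 < nth 0%N e i)%N ->
  mono (decr_nth e i) = divcm (mono e) (ucm i).
Proof.
move=> pos; apply/eqP/cmP => j.
rewrite divcmE monoE ucmE /decr_nth nth_strip monoE nth_set_nth /=.
case: eqP => [->|ne]; first by rewrite eqxx subn1.
by rewrite (introF eqP (nesym ne)) subn0.
Qed.

End ExponentSequences.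

(* Integer combinations of monomials, in a form the kernel can compute with;
   [interp] maps them into M(1). *)
Definition zpoly := seq (Z * seq nat).

Definition zunit (f : seq nat) : zpoly := [:: (1%Z, f)].

Definition zmulx (i : nat) (p : zpoly) : zpoly :=
  [seq (t.1, incr_nth t.2 i) | t <- p].
Definition zdx (i : nat) (p : zpoly) : zpoly :=
  [seq (Z.mul t.1 (Z.of_nat (nth 0%N t.2 i)), decr_nth t.2 i)
  | t <- p & nth 0%N t.2 i != 0%N].
Definition zscale (z : Z) (p : zpoly) : zpoly := [seq (Z.mul z t.1, t.2) | t <- p].

Definition zhmode (m : int) (p : zpoly) : zpoly :=
  match m with
  | Posz 0 => [::]
  | Posz n.+1 => zscale (Z.of_nat n.+1) (zdx n p)
  | Negz n => zmulx n p
  end.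

Fixpoint zNO (ms : seq int) (p : zpoly) : zpoly :=
  match ms with
  | [::] => p
  | m :: ms' =>
    match m with
    | Negz _ => zhmode m (zNO ms' p)
    | Posz 0 => [::]
    | Posz _ => zNO ms' (zhmode m p)
    end
  end.

Fixpoint sumz (l : seq int) : int := if l is a :: r then a + sumz r else 0.

Definition zwtb (p : zpoly) : nat := foldr maxn 0%N [seq wt t.2 | t <- p].

(* The modes of Y(h(-1)^k 1, z), with the truncation bound of [Ymono]. *)
Definition zY (k : nat) (n : int) (p : zpoly) : zpoly :=
  let B := (zwtb p + `|n| + k + 1)%N in
  flatten [seq zNO ms p | ms <- tuplesZ B k & sumz ms == n + 1 - k%:Z].

Fixpoint add_term (t : Z * seq nat) (p : zpoly) : zpoly :=
  match p with
  | [::] => [:: t]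
  | t' :: p' => if t'.2 == t.2 then (Z.add t'.1 t.1, t.2) :: p'
                else t' :: add_term t p'
  end.

Definition znorm (p : zpoly) : zpoly :=
  [seq t <- foldr add_term [::] p | negb (Z.eqb t.1 0)].

(* [2 L(n)]; the factor 2 keeps the coefficients integral. *)
Definition zLop (n : int) (p : zpoly) : zpoly := znorm (zY 2 (n + 1) p).

Definition zcanon (p : zpoly) : bool :=
  uniq [seq t.2 | t <- p] &&
  all (fun t => negb (Z.eqb t.1 0) && (last 1%N t.2 != 0%N)) p.

Section Interpretation.
Variable C : numClosedFieldType.
Local Notation M := (M1 C).

Definition zr (z : Z) : C := (int_of_Z z)%:~R.

Lemma zrD a b : zr (Z.add a b) = zr a + zr b.
Proof. by rewrite /zr -intrD; congr intmul; lia. Qed.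

Lemma zrM a b : zr (Z.mul a b) = zr a * zr b.
Proof. by rewrite /zr -intrM; congr intmul; lia. Qed.

Lemma zr_nat n : zr (Z.of_nat n) = n%:R.
Proof. by rewrite /zr (_ : int_of_Z _ = n%:Z) //; lia. Qed.

Lemma zr_eq0 z : (zr z == 0) = Z.eqb z 0.
Proof. by rewrite /zr intr_eq0; apply/eqP/idP; lia. Qed.

Definition interp (p : zpoly) : M := \sum_(t <- p) zr t.1 *: << mono t.2 >>.

Lemma interp_nil : interp [::] = 0.
Proof. exact: big_nil. Qed.

Lemma interp_cons t p : interp (t :: p) = zr t.1 *: << mono t.2 >> + interp p.
Proof. exact: big_cons. Qed.

Lemma interp_cat p q : interp (p ++ q) = interp p + interp q.
Proof. exact: big_cat. Qed.

Lemma interp_flatten (T : Type) (s : seq T) (f : T -> zpoly) :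
  interp (flatten [seq f x | x <- s]) = \sum_(x <- s) interp (f x).
Proof.
elim: s => [|x s IH]; first by rewrite big_nil interp_nil.
by rewrite big_cons /= interp_cat IH.
Qed.

Lemma interp_zunit f : interp (zunit f) = << mono f >>.
Proof. by rewrite interp_cons interp_nil addr0 (_ : zr 1 = 1) ?scale1r. Qed.

Lemma scale_malgU (c : C) k : c *: (<< k >> : M) = << c *g k >>.
Proof. by rewrite malgZ_def /fgscale msuppU1 big_seq_fset1 mcoeffUU mulr1. Qed.

Lemma mul_malgU (a b : {cmonom nat}) : (<< a >> : M) * << b >> = << mulcm a b >>.
Proof. by rewrite malgM_def fgmulUU mulr1. Qed.

Lemma mcoeff_malgU (k k' : {cmonom nat}) : (<< k >> : M)@_k' = (k == k')%:R.
Proof.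
have [->|ne] := eqVneq k k'; first by rewrite mcoeffUU.
by rewrite mcoeff_outdom // msuppU1 in_fset1 eq_sym.
Qed.

Lemma interp_zmulx i p : interp (zmulx i p) = hv C i.+1 * interp p.
Proof.
rewrite /interp big_map mulr_sumr; apply: eq_bigr => t _.
by rewrite -scalerAr /hv /= mul_malgU mono_incr_nth.
Qed.

Lemma interp_zscale z p : interp (zscale z p) = zr z *: interp p.
Proof.
rewrite /interp big_map scaler_sumr; apply: eq_bigr => t _.
by rewrite zrM scalerA.
Qed.

Lemma dxE i (v : M) :
  dx i v = \sum_(k <- msupp v) v@_k *: ((k i)%:R *: << divcm k (ucm i) >>).
Proof. by rewrite /dx mmapE; apply: eq_bigr => k _; rewrite mul_malgC. Qed.

Let malgC_additive : {additive C -> M} :=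
  GRing.Additive.clone _ _ (mkmalgU (@mone {cmonom nat})) _.

Lemma dxD i : {morph dx (C:=C) i : u v / u + v}.
Proof. by move=> u v; rewrite /dx; have /= -> := mmapD (f := malgC_additive). Qed.

Lemma dx0 i : dx (C:=C) i 0 = 0.
Proof. by rewrite /dx; have /= -> := mmap0 (f := malgC_additive). Qed.

Lemma dx_sum i (I : Type) (r : seq I) (F : I -> M) :
  dx i (\sum_(x <- r) F x) = \sum_(x <- r) dx i (F x).
Proof.
elim: r => [|x r IH]; first by rewrite !big_nil dx0.
by rewrite !big_cons dxD IH.
Qed.

Lemma dxZ i c (v : M) : dx i (c *: v) = c *: dx i v.
Proof.
have [->|c0] := eqVneq c 0; first by rewrite !scale0r dx0.
rewrite !dxE msuppZ (negbTE c0) scaler_sumr; apply: eq_bigr => k _.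
by rewrite mcoeffZ [RHS]scalerA.
Qed.

Lemma dx_scale_malgU i (c : C) k :
  dx i (c *: (<< k >> : M)) = (c * (k i)%:R) *: << divcm k (ucm i) >>.
Proof.
rewrite scale_malgU /dx; have /= -> := mmapU (f := malgC_additive).
by rewrite mul_malgC scalerA.
Qed.

Lemma interp_zdx i p : interp (zdx i p) = dx i (interp p).
Proof.
rewrite /interp dx_sum big_map big_filter big_mkcond /=; apply: eq_bigr => t _.
rewrite dx_scale_malgU monoE.
case: eqP => [->|/eqP ne]; first by rewrite mulr0 scale0r.
by rewrite zrM zr_nat mono_decr_nth // lt0n.
Qed.

End Interpretation.

Section OperatorsOnZpoly.
Variable C : numClosedFieldType.
Local Notation M := (M1 C).
Local Notation interp := (@interp C).

Lemma hmode_neg n (v : M) : hmode (Negz n) v = hv C n.+1 * v.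
Proof. by []. Qed.

Lemma hmode_pos n (v : M) : hmode (Posz n.+1) v = n.+1%:R *: dx n v.
Proof. by []. Qed.

Lemma hmode0 (v : M) : hmode 0 v = 0.
Proof. by []. Qed.

Lemma NO_cons_neg n ms (v : M) : NO (Negz n :: ms) v = hmode (Negz n) (NO ms v).
Proof. by []. Qed.

Lemma NO_cons_pos n ms (v : M) :
  NO (Posz n.+1 :: ms) v = NO ms (hmode (Posz n.+1) v).
Proof. by []. Qed.

Lemma NO_cons0 ms (v : M) : NO (0 :: ms) v = 0.
Proof. by []. Qed.

Lemma hmode_interp m p : hmode m (interp p) = interp (zhmode m p).
Proof.
case: m => [[|n]|n].
- by rewrite hmode0 interp_nil.
- by rewrite hmode_pos interp_zscale interp_zdx zr_nat.
- by rewrite hmode_neg interp_zmulx.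
Qed.

Lemma NO_interp ms p : NO ms (interp p) = interp (zNO ms p).
Proof.
elim: ms p => [|[[|n]|n] ms IH] p //.
- by rewrite NO_cons0 interp_nil.
- by rewrite NO_cons_pos hmode_interp IH.
- by rewrite NO_cons_neg IH hmode_interp.
Qed.

Lemma sumzE (ms : seq int) : \sum_(m <- ms) m = sumz ms.
Proof. by elim: ms => [|m ms IH]; rewrite ?big_nil ?big_cons ?IH. Qed.

Lemma prod_binomZ_nseq1 (ms : seq int) k :
  \prod_(q <- zip ms (nseq k 1%N)) binomZ C (- q.1 - 1) q.2.-1 = 1.
Proof.
elim: ms k => [|m ms IH] [|k] //=; rewrite ?big_nil //.
by rewrite big_cons IH /binomZ big_ord0 fact0 divr1 mulr1.
Qed.

Lemma Ymono_interp k n p :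
  Ymono (nseq k 1%N) n (interp p) =
  interp (flatten [seq zNO ms p | ms <- tuplesZ (wtb (interp p) + `|n| + k + 1) k
                                 & sumz ms == n + 1 - k%:Z]).
Proof.
rewrite /Ymono size_nseq sumn_nseq mul1n interp_flatten big_filter.
rewrite [LHS](eq_bigl (fun ms => sumz ms == n + 1 - k%:Z)) => [|ms]; last by rewrite sumzE.
by apply: eq_bigr => ms _; rewrite prod_binomZ_nseq1 scale1r NO_interp.
Qed.

Lemma interp_add_term t p :
  interp (add_term t p) = zr C t.1 *: << mono t.2 >> + interp p.
Proof.
elim: p => [|t' p IH] /=; first by rewrite interp_cons.
rewrite !interp_cons; case: eqP => [e|_].
  by rewrite interp_cons zrD scalerDl e addrAC addrC.
by rewrite interp_cons IH; exact: (addrCA (V := M)).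
Qed.

Lemma interp_znorm p : interp (znorm p) = interp p.
Proof.
have -> : interp (znorm p) = interp (foldr add_term [::] p).
  rewrite /znorm; elim: (foldr add_term [::] p) => [|t q IH] //=.
  case: ifP => [_|/negbFE z]; first by rewrite !interp_cons IH.
  by rewrite interp_cons IH (_ : zr C t.1 = 0) ?scale0r ?add0r //; apply/eqP; rewrite zr_eq0.
by elim: p => [|t p IH] //=; rewrite interp_add_term IH interp_cons.
Qed.

End OperatorsOnZpoly.

(* On a canonical [zpoly] the terms are the coefficients of [interp], which
   makes [zwtb] compute the truncation bound [wtb] used by [Ymono]. *)
Section CanonicalZpoly.
Variable C : numClosedFieldType.
Local Notation M := (M1 C).
Local Notation interp := (@interp C).

Lemma mcoeff_interp p k :
  (interp p)@_k = \sum_(t <- p) zr C t.1 * (mono t.2 == k)%:R.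
Proof.
rewrite raddf_sum; apply: eq_bigr => t _.
by rewrite /= mcoeffZ mcoeff_malgU.
Qed.

Lemma mcoeff_interp_notin p k :
  (forall t, t \in p -> mono t.2 != k) -> (interp p)@_k = 0.
Proof.
move=> h; rewrite mcoeff_interp big_seq big1 // => t tp.
by rewrite (negbTE (h t tp)) mulr0.
Qed.

Lemma mcoeff_interp_canon p c e :
  zcanon p -> (c, e) \in p -> (interp p)@_(mono e) = zr C c.
Proof.
elim: p => [|[c0 e0] p IH] // cp0.
move: (cp0); rewrite /zcanon map_cons cons_uniq /=.
move=> /andP[/andP[ne0 u] /andP[/andP[_ _] al]].
have cp : zcanon p by rewrite /zcanon u al.
have mono_neq t : t \in p -> mono t.2 != mono e0.
  move=> tp; apply: contra ne0 => /eqP /mono_inj eqm.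
  move/allP: al => /(_ t tp) /andP[_ lt].
  by rewrite -(eqm lt) ?map_f //; case/andP: cp0 => _ /andP[/andP[]].
rewrite mcoeff_interp big_cons -mcoeff_interp in_cons => /orP[/eqP [-> ->]|inp].
  by rewrite eqxx mulr1 mcoeff_interp_notin ?addr0.
by rewrite (IH cp inp) eq_sym (negbTE (mono_neq _ inp)) mulr0 add0r.
Qed.

Lemma msupp_interp_canon p k : zcanon p ->
  (k \in msupp (interp p)) = (k \in [seq mono t.2 | t <- p]).
Proof.
move=> cp; apply/idP/idP.
  rewrite -mcoeff_neq0; apply: contraR => nk.
  apply/eqP/mcoeff_interp_notin => t tp; apply: contra nk => /eqP <-.
  exact: (map_f (fun t => mono t.2) tp).
case/mapP => -[c e] tp ->; rewrite -mcoeff_neq0 (mcoeff_interp_canon cp tp) zr_eq0.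
by move/andP: cp => [_ /allP /(_ _ tp) /andP[]].
Qed.

Lemma wtb_interp_canon p : zcanon p -> wtb (interp p) = zwtb p.
Proof.
move=> cp; have [u /allP al] := andP cp.
have pe : perm_eq (msupp (interp p)) [seq mono t.2 | t <- p].
  apply: uniq_perm; first exact: fset_uniq; last by move=> k; rewrite msupp_interp_canon.
  rewrite (map_comp mono snd) map_inj_in_uniq // => e e' /mapP[t tp ->] /mapP[t' tp' ->].
  by apply: mono_inj; [case/andP: (al _ tp) | case/andP: (al _ tp')].
rewrite /wtb (perm_big _ pe) big_map /zwtb.
elim: p {cp u al pe} => [|t p IH]; first by rewrite big_nil.
by rewrite big_cons IH wtm_mono.
Qed.

Lemma Ymono_interp_canon k n p : zcanon p ->
  Ymono (nseq k 1%N) n (interp p) = interp (zY k n p).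
Proof. by move=> cp; rewrite Ymono_interp wtb_interp_canon. Qed.

Lemma interp_zLop n p : zcanon p -> interp (zLop n p) = 2%:R *: Lop n (interp p).
Proof.
move=> cp; rewrite /Lop interp_znorm (Ymono_interp_canon 2 (n + 1) cp).
by rewrite scalerA mulfV ?pnatr_eq0 ?scale1r.
Qed.

End CanonicalZpoly.

(* The weight is an integer so that lowering it by any mode index makes sense. *)
Section Grading.
Variable C : numClosedFieldType.
Local Notation M := (M1 C).

Definition homog (w : int) (b : bool) (v : M) :=
  forall k, k \in msupp v -> (wtm k)%:Z = w /\ odd (lenm k) = b.

Lemma homog0 w b : homog w b 0.
Proof. by move=> k; rewrite msupp0 in_fset0. Qed.

Lemma homogD w b u v : homog w b u -> homog w b v -> homog w b (u + v).
Proof.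
by move=> hu hv k /(fsubsetP (msuppD_le u v)); rewrite in_fsetU => /orP[/hu|/hv].
Qed.

Lemma homogZ w b c v : homog w b v -> homog w b (c *: v).
Proof. by move=> hv k /(fsubsetP (msuppZ_le c v)) /hv. Qed.

Lemma homog_sum w b (I : eqType) (r : seq I) (P : pred I) (F : I -> M) :
  (forall i, i \in r -> P i -> homog w b (F i)) -> homog w b (\sum_(i <- r | P i) F i).
Proof.
move=> h; rewrite big_seq_cond; elim/big_ind: _ => //; [exact: homog0 | exact: homogD|].
by move=> i /andP[]; exact: h.
Qed.

Lemma homogU k : homog (wtm k)%:Z (odd (lenm k)) (<< k >> : M).
Proof. by move=> k'; rewrite msuppU1 in_fset1 => /eqP ->. Qed.

Lemma homog_vac : homog 0 false (vac C).
Proof.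
have := @homogU (onecm nat); rewrite wtm1 lenm1.
by rewrite /vac (_ : 1 = << @mone {cmonom nat} >>).
Qed.

Lemma homog_mulhv w b n v :
  homog w b v -> homog (w + n.+1%:Z) (~~ b) (hv C n.+1 * v).
Proof.
move=> hv0 k /msuppM_le [k1 [k2 [k1in k2in ->]]].
move: k1in; rewrite /hv /= msuppU1 in_fset1 => /eqP ->.
have [w2 b2] := hv0 _ k2in.
rewrite (_ : @mmul _ (ucm n) k2 = mulcm (ucm n) k2) //.
rewrite wtmM lenmM wtmU lenmU -w2 -b2 oddD.
by split; first rewrite PoszD addrC.
Qed.

Lemma homog_dx w b i v : homog w b v -> homog (w - i.+1%:Z) (~~ b) (dx i v).
Proof.
move=> hv0; rewrite dxE; apply: homog_sum => k kin _.
apply: homogZ; have [->|pos] := posnP (k i); first by rewrite scale0r; exact: homog0.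
apply: homogZ => k'; rewrite msuppU1 in_fset1 => /eqP ->.
have [] := hv0 _ kin; rewrite -{1 2}(divcm_ucmK pos) wtmM lenmM wtmU lenmU.
rewrite (_ : @ucm (reverse_coercion _ _) i = ucm i) // => <- <-.
by split; [lia | rewrite oddD /= negbK].
Qed.

Lemma homog_hmode w b m v : homog w b v -> homog (w - m) (~~ b) (hmode m v).
Proof.
move=> hv0; case: m => [[|n]|n].
- by rewrite hmode0; exact: homog0.
- by rewrite hmode_pos; apply: homogZ; exact: homog_dx.
- by rewrite hmode_neg NegzE opprK; exact: homog_mulhv.
Qed.

Lemma homog_NO w b ms v : homog w b v ->
  homog (w - sumz ms) (b (+) odd (size ms)) (NO ms v).
Proof.
elim: ms w b v => [|m ms IH] w b v hv0; first by rewrite /= subr0 addbF.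
rewrite -[sumz _]/(m + sumz ms) -[size _]/((size ms).+1) oddS addbN.
case: m => [[|n]|n].
- by rewrite NO_cons0; exact: homog0.
- rewrite NO_cons_pos opprD addrA -addNb.
  exact: IH _ _ _ (homog_hmode (m := Posz n.+1) hv0).
- rewrite NO_cons_neg opprD addrA addrAC.
  exact: (homog_hmode (m := Negz n) (IH _ _ _ hv0)).
Qed.

Lemma size_tuplesZ B r ms : ms \in tuplesZ B r -> size ms = r.
Proof.
elim: r ms => [|r IH] ms; first by rewrite /= inE => /eqP ->.
by case/allpairsPdep => m [t [_ tin ->]] /=; rewrite (IH _ tin).
Qed.

Lemma homog_Ymono w b ns n v : homog w b v ->
  homog (w - (n + 1 - (sumn ns)%:Z)) (b (+) odd (size ns)) (Ymono ns n v).
Proof.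
move=> hv0; apply: homog_sum => ms msin /eqP sm; apply: homogZ.
by have := homog_NO (ms := ms) hv0; rewrite -sumzE sm (size_tuplesZ msin).
Qed.

Lemma homog_Lop w b n v : homog w b v -> homog (w - n) b (Lop n v).
Proof.
move=> hv0; apply: homogZ; have := homog_Ymono (ns := [:: 1%N; 1%N]) (n := n + 1) hv0.
by rewrite /= addbF (_ : n + 1 + 1 - 2%:Z = n) //; lia.
Qed.

Lemma inMplus_homog m v : inMplus m v <-> homog m%:Z false v.
Proof.
split=> h k kin; have [w o] := h k kin.
  by split; [rewrite w | apply/negbTE].
by split; [move: w => [] | rewrite o].
Qed.

End Grading.

Section Linearity.
Variable C : numClosedFieldType.
Local Notation M := (M1 C).

Lemma hmodeZ m c (v : M) : hmode m (c *: v) = c *: hmode m v.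
Proof.
case: m => [[|n]|n].
- by rewrite !hmode0 scaler0.
- by rewrite !hmode_pos dxZ !scalerA mulrC.
- by rewrite !hmode_neg scalerAr.
Qed.

Lemma NOZ ms c (v : M) : NO ms (c *: v) = c *: NO ms v.
Proof.
elim: ms v => [|[[|n]|n] ms IH] v //.
- by rewrite !NO_cons0 scaler0.
- by rewrite NO_cons_pos NO_cons_pos hmodeZ; exact: IH.
- by rewrite NO_cons_neg NO_cons_neg (IH v) hmodeZ.
Qed.

Lemma YmonoZ ns n c (v : M) : Ymono ns n (c *: v) = c *: Ymono ns n v.
Proof.
have [->|c0] := eqVneq c 0.
  rewrite !scale0r /Ymono big1 // => ms _.
  by have := NOZ ms 0 (0 : M); rewrite !scale0r => ->; rewrite scaler0.
rewrite /Ymono /wtb msuppZ (negbTE c0) -/(wtb v) scaler_sumr.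
by apply: eq_bigr => ms _; rewrite NOZ !scalerA mulrC.
Qed.

Lemma LopZ n c (v : M) : Lop n (c *: v) = c *: Lop n v.
Proof. by rewrite /Lop YmonoZ !scalerA mulrC. Qed.

End Linearity.

Section Span.
Variables (C : numClosedFieldType) (S : M1 C -> Prop).

Lemma in_span0 : in_span S 0.
Proof. by exists [::]; split => //; rewrite big_nil. Qed.

Lemma in_spanD u v : in_span S u -> in_span S v -> in_span S (u + v).
Proof.
move=> [s1 [h1 ->]] [s2 [h2 ->]]; exists (s1 ++ s2); split; last by rewrite big_cat.
by move=> p; rewrite mem_cat => /orP[/h1|/h2].
Qed.

Lemma in_spanZ c v : in_span S v -> in_span S (c *: v).
Proof.
move=> [s [h ->]]; exists [seq (c * p.1, p.2) | p <- s]; split.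
  by move=> p /mapP[q qs ->]; exact: (h q qs).
by rewrite scaler_sumr big_map; apply: eq_bigr => p _; rewrite scalerA.
Qed.

Lemma in_span_sum (I : eqType) (r : seq I) (F : I -> M1 C) :
  (forall i, i \in r -> in_span S (F i)) -> in_span S (\sum_(i <- r) F i).
Proof.
move=> h; rewrite big_seq; elim/big_ind: _ => //; [exact: in_span0 | exact: in_spanD].
Qed.

Lemma in_span_gen v : S v -> in_span S v.
Proof.
move=> h; exists [:: (1, v)]; split; last by rewrite big_seq1 scale1r.
by move=> p; rewrite inE => /eqP ->.
Qed.

End Span.

Fixpoint enum_exps (j len n : nat) : seq (seq nat) :=
  match len with
  | 0 => if n == 0%N then [:: [::]] else [::]
  | len'.+1 => flatten [seq [seq a :: t | t <- enum_exps j.+1 len' (n - a * j.+1)]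
                       | a <- iota 0 (n %/ j.+1).+1]
  end.

Lemma mem_enum_exps len j n e : size e = len -> wt_from j e = n ->
  e \in enum_exps j len n.
Proof.
elim: len j n e => [|len IH] j n [|a e] //; first by move=> _ <-; rewrite /= inE.
move=> [se] wte; apply/flatten_mapP; exists a.
  by rewrite mem_iota /= add0n ltnS leq_divRL // -wte leq_addr.
by apply/mapP; exists e => //; apply: IH => //; rewrite -wte addKn.
Qed.

Definition even_exps (m : nat) : seq (seq nat) :=
  [seq strip e | e <- enum_exps 0 m m & ~~ odd (sumn e)].

Lemma even_expsP (m : nat) (k : {cmonom nat}) : wtm k = m -> ~~ odd (lenm k) ->
  exists2 e, e \in even_exps m & k = mono e.
Proof.
move=> wk lk.
have k_eq0 i : (m <= i)%N -> k i = 0%N.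
  move=> le; apply/eqP; rewrite -leqn0 leqNgt; apply/negP => pos.
  have := wtm_ge k i; rewrite wk leqNgt => /negP; apply.
  by apply: (leq_trans (n := i.+1)); [rewrite ltnS | rewrite leq_pmull].
pose e := [seq k i | i <- iota 0 m].
have ke : k = mono e.
  apply/eqP/cmP => i; rewrite monoE.
  have [lt|ge] := ltnP i m; first by rewrite (nth_map 0%N) ?size_iota // nth_iota.
  by rewrite nth_default ?size_map ?size_iota // k_eq0.
exists (strip e); last by rewrite mono_strip.
apply/mapP; exists e => //; rewrite mem_filter -lenm_mono -ke lk /=.
by apply: mem_enum_exps; rewrite ?size_map ?size_iota // -/(wt e) -wtm_mono -ke.
Qed.

Definition plus_exps (w : nat) (f : seq nat) : bool :=
  [&& last 1%N f != 0%N, wt f == w & ~~ odd (sumn f)].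

Lemma msupp_inMplus (C : numClosedFieldType) m (v : M1 C) :
  inMplus m v -> {subset msupp v <= [seq mono e | e <- even_exps m]}.
Proof.
move=> hv k /hv [wk lk]; have [e em ->] := even_expsP wk lk.
exact: map_f.
Qed.

(* A row [CertRow d e l1 l3 a b] asserts the identity, in M(1), of
   [d x^e] with the sum of [c (2 L(-1) x^f)] over [(c, f)] in [l1],
   of [c (2 L(-3) x^f)] over [(c, f)] in [l3], of [a (2^5 L(-2)^5 1)]
   and of [b (h(-1)^4 1)_(-3) h(-1)^4 1]. *)
Record cert_row := CertRow {
  cr_scale : Z; cr_exps : seq nat; cr_L1 : zpoly; cr_L3 : zpoly;
  cr_L2pow : Z; cr_Y : Z }.

Definition zL2pow5 : zpoly := iter 5 (zLop (-2)) (zunit [::]).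

Definition zYh4 : zpoly := zY 4 (-3) (zunit [:: 4%N]).

Definition cert_rhs (pL pY : zpoly) (r : cert_row) : zpoly :=
  flatten [seq zscale t.1 (zLop (-1) (zunit t.2)) | t <- cr_L1 r] ++
  flatten [seq zscale t.1 (zLop (-3) (zunit t.2)) | t <- cr_L3 r] ++
  zscale (cr_L2pow r) pL ++ zscale (cr_Y r) pY.

Definition cert_row_ok (pL pY : zpoly) (r : cert_row) : bool :=
  [&& negb (Z.eqb (cr_scale r) 0), all (plus_exps 9 \o snd) (cr_L1 r),
      all (plus_exps 7 \o snd) (cr_L3 r)
    & nilp (znorm ((cr_scale r, cr_exps r) :: zscale (-1) (cert_rhs pL pY r)))].

Section Certificate.
Local Open Scope Z_scope.

Definition certificate : seq cert_row := [::
  CertRow 24576 [:: 1; 0; 0; 0; 0; 0; 0; 0; 1]%N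
    [:: (1500, [:: 1; 0; 0; 0; 0; 0; 0; 1]%N);
       (-300, [:: 0; 1; 0; 0; 0; 0; 1]%N); (116, [:: 0; 0; 1; 0; 0; 1]%N);
       (-52, [:: 3; 0; 0; 0; 0; 1]%N); (-60, [:: 0; 0; 0; 1; 1]%N);
       (-60, [:: 2; 1; 0; 0; 1]%N); (-60, [:: 2; 0; 1; 1]%N);
       (-24, [:: 5; 0; 0; 1]%N); (-36, [:: 4; 1; 1]%N); (-3, [:: 7; 1]%N)]
    [:: (24, [:: 1; 0; 0; 0; 0; 1]%N); (120, [:: 0; 1; 0; 0; 1]%N);
       (-24, [:: 0; 0; 1; 1]%N); (24, [:: 3; 0; 0; 1]%N); (72, [:: 2; 1; 1]%N);
       (12, [:: 5; 1]%N)]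
    0 3;
  CertRow 3072 [:: 0; 1; 0; 0; 0; 0; 0; 1]%N
    [:: (36, [:: 1; 0; 0; 0; 0; 0; 0; 1]%N); (300, [:: 0; 1; 0; 0; 0; 0; 1]%N);
       (-116, [:: 0; 0; 1; 0; 0; 1]%N); (52, [:: 3; 0; 0; 0; 0; 1]%N);
       (60, [:: 0; 0; 0; 1; 1]%N); (60, [:: 2; 1; 0; 0; 1]%N);
       (60, [:: 2; 0; 1; 1]%N); (24, [:: 5; 0; 0; 1]%N); (36, [:: 4; 1; 1]%N);
       (3, [:: 7; 1]%N)]
    [:: (-24, [:: 1; 0; 0; 0; 0; 1]%N); (-120, [:: 0; 1; 0; 0; 1]%N);
       (24, [:: 0; 0; 1; 1]%N); (-24, [:: 3; 0; 0; 1]%N);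
       (-72, [:: 2; 1; 1]%N); (-12, [:: 5; 1]%N)]
    0 (-3);
  CertRow 6144 [:: 0; 0; 1; 0; 0; 0; 1]%N
    [:: (-252, [:: 1; 0; 0; 0; 0; 0; 0; 1]%N);
       (-564, [:: 0; 1; 0; 0; 0; 0; 1]%N); (812, [:: 0; 0; 1; 0; 0; 1]%N);
       (-364, [:: 3; 0; 0; 0; 0; 1]%N); (-420, [:: 0; 0; 0; 1; 1]%N);
       (-420, [:: 2; 1; 0; 0; 1]%N); (-420, [:: 2; 0; 1; 1]%N);
       (-168, [:: 5; 0; 0; 1]%N); (-252, [:: 4; 1; 1]%N); (-21, [:: 7; 1]%N)]
    [:: (168, [:: 1; 0; 0; 0; 0; 1]%N); (840, [:: 0; 1; 0; 0; 1]%N);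
       (-168, [:: 0; 0; 1; 1]%N); (168, [:: 3; 0; 0; 1]%N);
       (504, [:: 2; 1; 1]%N); (84, [:: 5; 1]%N)]
    0 21;
  CertRow 8192 [:: 3; 0; 0; 0; 0; 0; 1]%N
    [:: (1836, [:: 1; 0; 0; 0; 0; 0; 0; 1]%N);
       (452, [:: 0; 1; 0; 0; 0; 0; 1]%N); (-284, [:: 0; 0; 1; 0; 0; 1]%N);
       (1116, [:: 3; 0; 0; 0; 0; 1]%N); (500, [:: 0; 0; 0; 1; 1]%N);
       (500, [:: 2; 1; 0; 0; 1]%N); (500, [:: 2; 0; 1; 1]%N);
       (200, [:: 5; 0; 0; 1]%N); (300, [:: 4; 1; 1]%N); (25, [:: 7; 1]%N)]
    [:: (-2248, [:: 1; 0; 0; 0; 0; 1]%N); (-1000, [:: 0; 1; 0; 0; 1]%N);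
       (200, [:: 0; 0; 1; 1]%N); (-200, [:: 3; 0; 0; 1]%N);
       (-600, [:: 2; 1; 1]%N); (-100, [:: 5; 1]%N)]
    0 (-25);
  CertRow 3072 [:: 0; 0; 0; 1; 0; 1]%N
    [:: (252, [:: 1; 0; 0; 0; 0; 0; 0; 1]%N);
       (564, [:: 0; 1; 0; 0; 0; 0; 1]%N); (-300, [:: 0; 0; 1; 0; 0; 1]%N);
       (364, [:: 3; 0; 0; 0; 0; 1]%N); (420, [:: 0; 0; 0; 1; 1]%N);
       (420, [:: 2; 1; 0; 0; 1]%N); (420, [:: 2; 0; 1; 1]%N);
       (168, [:: 5; 0; 0; 1]%N); (252, [:: 4; 1; 1]%N); (21, [:: 7; 1]%N)]
    [:: (-168, [:: 1; 0; 0; 0; 0; 1]%N); (-840, [:: 0; 1; 0; 0; 1]%N);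
       (168, [:: 0; 0; 1; 1]%N); (-168, [:: 3; 0; 0; 1]%N);
       (-504, [:: 2; 1; 1]%N); (-84, [:: 5; 1]%N)]
    0 (-21);
  CertRow 12288 [:: 2; 1; 0; 0; 0; 1]%N
    [:: (-5508, [:: 1; 0; 0; 0; 0; 0; 0; 1]%N);
       (-1356, [:: 0; 1; 0; 0; 0; 0; 1]%N); (852, [:: 0; 0; 1; 0; 0; 1]%N);
       (-1300, [:: 3; 0; 0; 0; 0; 1]%N); (-1500, [:: 0; 0; 0; 1; 1]%N);
       (-1500, [:: 2; 1; 0; 0; 1]%N); (-1500, [:: 2; 0; 1; 1]%N);
       (-600, [:: 5; 0; 0; 1]%N); (-900, [:: 4; 1; 1]%N); (-75, [:: 7; 1]%N)]
    [:: (6744, [:: 1; 0; 0; 0; 0; 1]%N); (3000, [:: 0; 1; 0; 0; 1]%N);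
       (-600, [:: 0; 0; 1; 1]%N); (600, [:: 3; 0; 0; 1]%N);
       (1800, [:: 2; 1; 1]%N); (300, [:: 5; 1]%N)]
    0 75;
  CertRow 12288 [:: 0; 0; 0; 0; 2]%N
    [:: (-1260, [:: 1; 0; 0; 0; 0; 0; 0; 1]%N);
       (-2820, [:: 0; 1; 0; 0; 0; 0; 1]%N); (1500, [:: 0; 0; 1; 0; 0; 1]%N);
       (-1820, [:: 3; 0; 0; 0; 0; 1]%N); (-564, [:: 0; 0; 0; 1; 1]%N);
       (-2100, [:: 2; 1; 0; 0; 1]%N); (-2100, [:: 2; 0; 1; 1]%N);
       (-840, [:: 5; 0; 0; 1]%N); (-1260, [:: 4; 1; 1]%N); (-105, [:: 7; 1]%N)]
    [:: (840, [:: 1; 0; 0; 0; 0; 1]%N); (4200, [:: 0; 1; 0; 0; 1]%N);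
       (-840, [:: 0; 0; 1; 1]%N); (840, [:: 3; 0; 0; 1]%N);
       (2520, [:: 2; 1; 1]%N); (420, [:: 5; 1]%N)]
    0 105;
  CertRow 24576 [:: 2; 0; 1; 0; 1]%N
    [:: (23940, [:: 1; 0; 0; 0; 0; 0; 0; 1]%N);
       (7500, [:: 0; 1; 0; 0; 0; 0; 1]%N); (-2900, [:: 0; 0; 1; 0; 0; 1]%N);
       (1300, [:: 3; 0; 0; 0; 0; 1]%N); (7644, [:: 0; 0; 0; 1; 1]%N);
       (7644, [:: 2; 1; 0; 0; 1]%N); (1500, [:: 2; 0; 1; 1]%N);
       (600, [:: 5; 0; 0; 1]%N); (900, [:: 4; 1; 1]%N); (75, [:: 7; 1]%N)]
    [:: (-31320, [:: 1; 0; 0; 0; 0; 1]%N); (-15288, [:: 0; 1; 0; 0; 1]%N);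
       (600, [:: 0; 0; 1; 1]%N); (-600, [:: 3; 0; 0; 1]%N);
       (-1800, [:: 2; 1; 1]%N); (-300, [:: 5; 1]%N)]
    0 (-75);
  CertRow 6144 [:: 1; 2; 0; 0; 1]%N
    [:: (900, [:: 1; 0; 0; 0; 0; 0; 0; 1]%N);
       (-180, [:: 0; 1; 0; 0; 0; 0; 1]%N); (-340, [:: 0; 0; 1; 0; 0; 1]%N);
       (1300, [:: 3; 0; 0; 0; 0; 1]%N); (-36, [:: 0; 0; 0; 1; 1]%N);
       (1500, [:: 2; 1; 0; 0; 1]%N); (1500, [:: 2; 0; 1; 1]%N);
       (600, [:: 5; 0; 0; 1]%N); (900, [:: 4; 1; 1]%N); (75, [:: 7; 1]%N)]
    [:: (-600, [:: 1; 0; 0; 0; 0; 1]%N); (72, [:: 0; 1; 0; 0; 1]%N);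
       (600, [:: 0; 0; 1; 1]%N); (-600, [:: 3; 0; 0; 1]%N);
       (-1800, [:: 2; 1; 1]%N); (-300, [:: 5; 1]%N)]
    0 (-75);
  CertRow 2048 [:: 5; 0; 0; 0; 1]%N
    [:: (-7260, [:: 1; 0; 0; 0; 0; 0; 0; 1]%N);
       (-1620, [:: 0; 1; 0; 0; 0; 0; 1]%N); (2060, [:: 0; 0; 1; 0; 0; 1]%N);
       (1460, [:: 3; 0; 0; 0; 0; 1]%N); (-1860, [:: 0; 0; 0; 1; 1]%N);
       (-1860, [:: 2; 1; 0; 0; 1]%N); (1980, [:: 2; 0; 1; 1]%N);
       (536, [:: 5; 0; 0; 1]%N); (420, [:: 4; 1; 1]%N); (35, [:: 7; 1]%N)]
    [:: (9960, [:: 1; 0; 0; 0; 0; 1]%N); (3720, [:: 0; 1; 0; 0; 1]%N);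
       (-2280, [:: 0; 0; 1; 1]%N); (-1560, [:: 3; 0; 0; 1]%N);
       (-840, [:: 2; 1; 1]%N); (-140, [:: 5; 1]%N)]
    0 (-35);
  CertRow 6144 [:: 2; 0; 0; 2]%N
    [:: (-7644, [:: 1; 0; 0; 0; 0; 0; 0; 1]%N);
       (-1748, [:: 0; 1; 0; 0; 0; 0; 1]%N); (1932, [:: 0; 0; 1; 0; 0; 1]%N);
       (52, [:: 3; 0; 0; 0; 0; 1]%N); (-1988, [:: 0; 0; 0; 1; 1]%N);
       (-1988, [:: 2; 1; 0; 0; 1]%N); (1084, [:: 2; 0; 1; 1]%N);
       (24, [:: 5; 0; 0; 1]%N); (36, [:: 4; 1; 1]%N); (3, [:: 7; 1]%N)]
    [:: (10216, [:: 1; 0; 0; 0; 0; 1]%N); (3976, [:: 0; 1; 0; 0; 1]%N);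
       (-2024, [:: 0; 0; 1; 1]%N); (-24, [:: 3; 0; 0; 1]%N);
       (-72, [:: 2; 1; 1]%N); (-12, [:: 5; 1]%N)]
    0 (-3);
  CertRow 3072 [:: 1; 1; 1; 1]%N
    [:: (-252, [:: 1; 0; 0; 0; 0; 0; 0; 1]%N);
       (-564, [:: 0; 1; 0; 0; 0; 0; 1]%N); (-724, [:: 0; 0; 1; 0; 0; 1]%N);
       (-364, [:: 3; 0; 0; 0; 0; 1]%N); (-420, [:: 0; 0; 0; 1; 1]%N);
       (-420, [:: 2; 1; 0; 0; 1]%N); (-420, [:: 2; 0; 1; 1]%N);
       (-168, [:: 5; 0; 0; 1]%N); (-252, [:: 4; 1; 1]%N); (-21, [:: 7; 1]%N)]
    [:: (168, [:: 1; 0; 0; 0; 0; 1]%N); (840, [:: 0; 1; 0; 0; 1]%N);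
       (1368, [:: 0; 0; 1; 1]%N); (168, [:: 3; 0; 0; 1]%N);
       (504, [:: 2; 1; 1]%N); (84, [:: 5; 1]%N)]
    0 21;
  CertRow 1536 [:: 0; 3; 0; 1]%N
    [:: (-396, [:: 1; 0; 0; 0; 0; 0; 0; 1]%N);
       (1308, [:: 0; 1; 0; 0; 0; 0; 1]%N); (1788, [:: 0; 0; 1; 0; 0; 1]%N);
       (-572, [:: 3; 0; 0; 0; 0; 1]%N); (876, [:: 0; 0; 0; 1; 1]%N);
       (-660, [:: 2; 1; 0; 0; 1]%N); (-660, [:: 2; 0; 1; 1]%N);
       (768, [:: 1; 2; 0; 1]%N); (-264, [:: 5; 0; 0; 1]%N);
       (-396, [:: 4; 1; 1]%N); (-33, [:: 7; 1]%N)]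
    [:: (264, [:: 1; 0; 0; 0; 0; 1]%N); (-1752, [:: 0; 1; 0; 0; 1]%N);
       (-3336, [:: 0; 0; 1; 1]%N); (264, [:: 3; 0; 0; 1]%N);
       (792, [:: 2; 1; 1]%N); (132, [:: 5; 1]%N)]
    0 33;
  CertRow 512 [:: 4; 1; 0; 1]%N
    [:: (1452, [:: 1; 0; 0; 0; 0; 0; 0; 1]%N);
       (324, [:: 0; 1; 0; 0; 0; 0; 1]%N); (-412, [:: 0; 0; 1; 0; 0; 1]%N);
       (-292, [:: 3; 0; 0; 0; 0; 1]%N); (372, [:: 0; 0; 0; 1; 1]%N);
       (372, [:: 2; 1; 0; 0; 1]%N); (-396, [:: 2; 0; 1; 1]%N);
       (-56, [:: 5; 0; 0; 1]%N); (-84, [:: 4; 1; 1]%N); (-7, [:: 7; 1]%N)]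
    [:: (-1992, [:: 1; 0; 0; 0; 0; 1]%N); (-744, [:: 0; 1; 0; 0; 1]%N);
       (456, [:: 0; 0; 1; 1]%N); (312, [:: 3; 0; 0; 1]%N);
       (168, [:: 2; 1; 1]%N); (28, [:: 5; 1]%N)]
    0 7;
  CertRow 6144 [:: 1; 0; 3]%N
    [:: (1116, [:: 1; 0; 0; 0; 0; 0; 0; 1]%N);
       (4692, [:: 0; 1; 0; 0; 0; 0; 1]%N); (6132, [:: 0; 0; 1; 0; 0; 1]%N);
       (1612, [:: 3; 0; 0; 0; 0; 1]%N); (3396, [:: 0; 0; 0; 1; 1]%N);
       (1860, [:: 2; 1; 0; 0; 1]%N); (1860, [:: 2; 0; 1; 1]%N);
       (768, [:: 1; 2; 0; 1]%N); (744, [:: 5; 0; 0; 1]%N);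
       (1536, [:: 1; 1; 2]%N); (-256, [:: 0; 3; 1]%N); (1116, [:: 4; 1; 1]%N);
       (93, [:: 7; 1]%N)]
    [:: (-744, [:: 1; 0; 0; 0; 0; 1]%N); (-6792, [:: 0; 1; 0; 0; 1]%N);
       (-11544, [:: 0; 0; 1; 1]%N); (-744, [:: 3; 0; 0; 1]%N);
       (-2232, [:: 2; 1; 1]%N); (-372, [:: 5; 1]%N)]
    0 (-93);
  CertRow 3072 [:: 0; 2; 2]%N
    [:: (396, [:: 1; 0; 0; 0; 0; 0; 0; 1]%N);
       (-1308, [:: 0; 1; 0; 0; 0; 0; 1]%N); (-1788, [:: 0; 0; 1; 0; 0; 1]%N);
       (572, [:: 3; 0; 0; 0; 0; 1]%N); (-876, [:: 0; 0; 0; 1; 1]%N);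
       (660, [:: 2; 1; 0; 0; 1]%N); (660, [:: 2; 0; 1; 1]%N);
       (-768, [:: 1; 2; 0; 1]%N); (264, [:: 5; 0; 0; 1]%N);
       (256, [:: 0; 3; 1]%N); (396, [:: 4; 1; 1]%N); (33, [:: 7; 1]%N)]
    [:: (-264, [:: 1; 0; 0; 0; 0; 1]%N); (1752, [:: 0; 1; 0; 0; 1]%N);
       (3336, [:: 0; 0; 1; 1]%N); (-264, [:: 3; 0; 0; 1]%N);
       (-792, [:: 2; 1; 1]%N); (-132, [:: 5; 1]%N)]
    0 (-33);
  CertRow 96 [:: 4; 0; 2]%N
    [:: (-324, [:: 1; 0; 0; 0; 0; 0; 0; 1]%N);
       (-108, [:: 0; 1; 0; 0; 0; 0; 1]%N); (20, [:: 0; 0; 1; 0; 0; 1]%N);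
       (-4, [:: 3; 0; 0; 0; 0; 1]%N); (-108, [:: 0; 0; 0; 1; 1]%N);
       (-108, [:: 2; 1; 0; 0; 1]%N); (12, [:: 2; 0; 1; 1]%N);
       (-24, [:: 5; 0; 0; 1]%N); (-12, [:: 4; 1; 1]%N); (-3, [:: 7; 1]%N)]
    [:: (408, [:: 1; 0; 0; 0; 0; 1]%N); (216, [:: 0; 1; 0; 0; 1]%N);
       (24, [:: 0; 0; 1; 1]%N); (-48, [:: 3; 0; 0; 1]%N);
       (-24, [:: 2; 1; 1]%N); (12, [:: 5; 1]%N)]
    0 3;
  CertRow 6144 [:: 3; 2; 1]%N
    [:: (-2700, [:: 1; 0; 0; 0; 0; 0; 0; 1]%N);
       (540, [:: 0; 1; 0; 0; 0; 0; 1]%N); (3068, [:: 0; 0; 1; 0; 0; 1]%N);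
       (2756, [:: 3; 0; 0; 0; 0; 1]%N); (108, [:: 0; 0; 0; 1; 1]%N);
       (108, [:: 2; 1; 0; 0; 1]%N); (3180, [:: 2; 0; 1; 1]%N);
       (1272, [:: 5; 0; 0; 1]%N); (1908, [:: 4; 1; 1]%N); (159, [:: 7; 1]%N)]
    [:: (4872, [:: 1; 0; 0; 0; 0; 1]%N); (-216, [:: 0; 1; 0; 0; 1]%N);
       (-4872, [:: 0; 0; 1; 1]%N); (-1272, [:: 3; 0; 0; 1]%N);
       (-744, [:: 2; 1; 1]%N); (-636, [:: 5; 1]%N)]
    0 (-159);
  CertRow 2048 [:: 7; 0; 1]%N
    [:: (50820, [:: 1; 0; 0; 0; 0; 0; 0; 1]%N);
       (11340, [:: 0; 1; 0; 0; 0; 0; 1]%N); (-14420, [:: 0; 0; 1; 0; 0; 1]%N);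
       (-10220, [:: 3; 0; 0; 0; 0; 1]%N); (13020, [:: 0; 0; 0; 1; 1]%N);
       (13020, [:: 2; 1; 0; 0; 1]%N); (-13860, [:: 2; 0; 1; 1]%N);
       (-168, [:: 5; 0; 0; 1]%N); (-2940, [:: 4; 1; 1]%N); (267, [:: 7; 1]%N)]
    [:: (-69720, [:: 1; 0; 0; 0; 0; 1]%N); (-26040, [:: 0; 1; 0; 0; 1]%N);
       (15960, [:: 0; 0; 1; 1]%N); (10920, [:: 3; 0; 0; 1]%N);
       (5880, [:: 2; 1; 1]%N); (-2604, [:: 5; 1]%N)]
    0 245;
  CertRow 3072 [:: 2; 4]%N
    [:: (2700, [:: 1; 0; 0; 0; 0; 0; 0; 1]%N);
       (-540, [:: 0; 1; 0; 0; 0; 0; 1]%N); (-3068, [:: 0; 0; 1; 0; 0; 1]%N);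
       (-2756, [:: 3; 0; 0; 0; 0; 1]%N); (-108, [:: 0; 0; 0; 1; 1]%N);
       (-108, [:: 2; 1; 0; 0; 1]%N); (-3180, [:: 2; 0; 1; 1]%N);
       (-1272, [:: 5; 0; 0; 1]%N); (-1908, [:: 4; 1; 1]%N); (512, [:: 3; 3]%N);
       (-159, [:: 7; 1]%N)]
    [:: (-4872, [:: 1; 0; 0; 0; 0; 1]%N); (216, [:: 0; 1; 0; 0; 1]%N);
       (4872, [:: 0; 0; 1; 1]%N); (1272, [:: 3; 0; 0; 1]%N);
       (744, [:: 2; 1; 1]%N); (636, [:: 5; 1]%N)]
    0 159;
  CertRow 1024 [:: 6; 2]%N
    [:: (-7260, [:: 1; 0; 0; 0; 0; 0; 0; 1]%N);
       (-1620, [:: 0; 1; 0; 0; 0; 0; 1]%N); (2060, [:: 0; 0; 1; 0; 0; 1]%N);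
       (1460, [:: 3; 0; 0; 0; 0; 1]%N); (-1860, [:: 0; 0; 0; 1; 1]%N);
       (-1860, [:: 2; 1; 0; 0; 1]%N); (1980, [:: 2; 0; 1; 1]%N);
       (24, [:: 5; 0; 0; 1]%N); (420, [:: 4; 1; 1]%N); (35, [:: 7; 1]%N)]
    [:: (9960, [:: 1; 0; 0; 0; 0; 1]%N); (3720, [:: 0; 1; 0; 0; 1]%N);
       (-2280, [:: 0; 0; 1; 1]%N); (-1560, [:: 3; 0; 0; 1]%N);
       (-840, [:: 2; 1; 1]%N); (372, [:: 5; 1]%N)]
    0 (-35);
  CertRow 96 [:: 10]%N
    [:: (-102060, [:: 1; 0; 0; 0; 0; 0; 0; 1]%N);
       (-7620, [:: 0; 1; 0; 0; 0; 0; 1]%N); (-46180, [:: 0; 0; 1; 0; 0; 1]%N);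
       (-4380, [:: 3; 0; 0; 0; 0; 1]%N); (-25908, [:: 0; 0; 0; 1; 1]%N);
       (-7860, [:: 2; 1; 0; 0; 1]%N); (1260, [:: 2; 0; 1; 1]%N);
       (-3840, [:: 1; 2; 0; 1]%N); (2520, [:: 5; 0; 0; 1]%N);
       (-7680, [:: 1; 1; 2]%N); (1280, [:: 0; 3; 1]%N); (5460, [:: 4; 1; 1]%N);
       (135, [:: 7; 1]%N)]
    [:: (117960, [:: 1; 0; 0; 0; 0; 1]%N); (31080, [:: 0; 1; 0; 0; 1]%N);
       (50040, [:: 0; 0; 1; 1]%N); (11880, [:: 3; 0; 0; 1]%N);
       (4440, [:: 2; 1; 1]%N); (2340, [:: 5; 1]%N)]
    96 (-1095)].
End Certificate.

Lemma certificate_rows_ok : all (cert_row_ok zL2pow5 zYh4) certificate.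
Proof. by vm_compute. Qed.

Lemma certificate_covers :
  all (fun e => has (fun r => cr_exps r == e) certificate) (even_exps 10).
Proof. by vm_compute. Qed.

Lemma zcanon_iter_zLop2 : all (fun j => zcanon (iter j (zLop (-2)) (zunit [::]))) (iota 0 5).
Proof. by vm_compute. Qed.

Lemma even_exps10 : [&& size (even_exps 10) == 22%N, uniq (even_exps 10)
                      & all (plus_exps 10) (even_exps 10)].
Proof. by vm_compute. Qed.

Section CertificateSoundness.
Variable C : numClosedFieldType.
Local Notation M := (M1 C).
Local Notation interp := (@interp C).
Local Notation spanned v := (in_span (@gens10 C) v).

Lemma zcanon_zunit f : last 1%N f != 0%N -> zcanon (zunit f).
Proof. by move=> l; rewrite /zcanon /= l. Qed.

Lemma inMplus_mono w f : plus_exps w f -> inMplus w (<< mono f >> : M).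
Proof.
move=> /and3P[_ /eqP wf ev] k; rewrite msuppU1 in_fset1 => /eqP ->.
by rewrite wtm_mono lenm_mono wf.
Qed.

Lemma interp_zLop_zunit n f : last 1%N f != 0%N ->
  interp (zLop n (zunit f)) = 2%:R *: Lop n << mono f >>.
Proof.
by move=> l; rewrite interp_zLop ?zcanon_zunit ?interp_zunit.
Qed.

Lemma interp_iter_zLop n i p :
  (forall j, (j < i)%N -> zcanon (iter j (zLop n) p)) ->
  interp (iter i (zLop n) p) = 2%:R ^+ i *: iter i (Lop n) (interp p).
Proof.
elim: i => [|i IH] cp; first by rewrite scale1r.
rewrite !iterS interp_zLop; last exact: cp.
rewrite IH => [|j /ltnW]; last exact: cp.
by rewrite LopZ scalerA exprS.
Qed.

Lemma h1pow4E : h1pow4 C = << mono [:: 4%N] >>.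
Proof.
rewrite /h1pow4 /hv !exprS expr0 mulr1 !mul_malgU; congr << _ >>.
by apply/eqP/cmP => i; rewrite !mulcmE onecmE addn0.
Qed.

Lemma interp_zYh4 : interp zYh4 = Ymono [:: 1%N; 1%N; 1%N; 1%N] (-3) (h1pow4 C).
Proof.
rewrite /zYh4 -(Ymono_interp_canon C 4 (-3) (@zcanon_zunit [:: 4%N] isT)) interp_zunit.
by rewrite h1pow4E.
Qed.

Lemma spanned_zLop_zunit n f : last 1%N f != 0%N -> @gens10 C (Lop n << mono f >>) ->
  spanned (interp (zLop n (zunit f))).
Proof. by move=> lf g; rewrite interp_zLop_zunit //; apply/in_spanZ/in_span_gen. Qed.

Lemma spanned_cert_rhs r :
  all (plus_exps 9 \o snd) (cr_L1 r) -> all (plus_exps 7 \o snd) (cr_L3 r) ->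
  spanned (interp (cert_rhs zL2pow5 zYh4 r)).
Proof.
move=> /allP L1 /allP L3; rewrite /cert_rhs 3!interp_cat 2!interp_flatten.
apply: in_spanD; last apply: in_spanD; last apply: in_spanD.
- apply: in_span_sum => t /L1 /= pt; have /and3P[lt _ _] := pt.
  rewrite interp_zscale; apply/in_spanZ/spanned_zLop_zunit => //.
  by left; exists << mono t.2 >>; split; first exact: inMplus_mono pt.
- apply: in_span_sum => t /L3 /= pt; have /and3P[lt _ _] := pt.
  rewrite interp_zscale; apply/in_spanZ/spanned_zLop_zunit => //.
  by right; left; exists << mono t.2 >>; split; first exact: inMplus_mono pt.
- rewrite interp_zscale interp_iter_zLop => [|j lt5]; last first.
    by apply: (allP zcanon_iter_zLop2); rewrite mem_iota.
  rewrite interp_zunit -[<< _ >>]/(vac C).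
  by apply/in_spanZ/in_spanZ/in_span_gen; do 3 right.
- rewrite interp_zscale interp_zYh4.
  by apply/in_spanZ/in_span_gen; right; right; left.
Qed.

Lemma spanned_cert_row r :
  cert_row_ok zL2pow5 zYh4 r -> spanned << mono (cr_exps r) >>.
Proof.
move=> /and4P[nz L1 L3 /nilP zero].
have := congr1 interp zero; rewrite interp_znorm interp_cons interp_zscale.
rewrite (_ : zr C (-1) = -1) // scaleN1r interp_nil => /eqP; rewrite addr_eq0 opprK.
move=> /eqP eq; have zD : zr C (cr_scale r) != 0 by rewrite zr_eq0.
rewrite -[<< _ >>](scalerK zD) eq; apply: in_spanZ.
exact: spanned_cert_rhs.
Qed.

End CertificateSoundness.

Section MonomialBasis.
Variables (C : numClosedFieldType) (n : nat) (s : seq (seq nat)).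
Hypotheses (size_s : size s = n) (uniq_s : uniq s)
           (canon_s : all (fun e => last 1%N e != 0%N) s).

Definition mono_family (i : 'I_n) : M1 C := << mono (nth [::] s i) >>.

Lemma mono_nth_inj (i j : 'I_n) : mono (nth [::] s i) = mono (nth [::] s j) -> i = j.
Proof.
have lt_s (l : 'I_n) : (l < size s)%N by rewrite size_s.
move/allP: canon_s => cs /mono_inj; rewrite !cs ?mem_nth // => /(_ isT isT) eq.
by apply: val_inj; apply/eqP; rewrite -(nth_uniq [::] (lt_s i) (lt_s j) uniq_s) eq.
Qed.

Lemma mcoeff_mono_family (c : 'I_n -> C) k :
  (\sum_i c i *: mono_family i)@_k = \sum_i c i * (mono (nth [::] s i) == k)%:R.
Proof. by rewrite raddf_sum; apply: eq_bigr => i _; rewrite /= mcoeffZ mcoeff_malgU. Qed.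

Lemma mono_family_free (c : 'I_n -> C) :
  \sum_i c i *: mono_family i = 0 -> forall i, c i = 0.
Proof.
move=> sum0 i; move: (congr1 (mcoeff (mono (nth [::] s i))) sum0).
rewrite mcoeff_mono_family mcoeff0 (bigD1 i) //= eqxx mulr1 big1 ?addr0 // => j ji.
by case: eqP => [/mono_nth_inj ij|_]; [rewrite ij eqxx in ji | rewrite mulr0].
Qed.

Lemma mono_family_span (v : M1 C) : {subset msupp v <= [seq mono e | e <- s]} ->
  v = \sum_(i : 'I_n) v@_(mono (nth [::] s i)) *: mono_family i.
Proof.
move=> supp; apply/malgP => k; rewrite mcoeff_mono_family.
have [/supp /mapP[e es ->]|kNv] := boolP (k \in msupp v); last first.
  rewrite mcoeff_outdom // big1 // => i _.
  by case: eqP => [->|_]; [rewrite mcoeff_outdom // mul0r | rewrite mulr0].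
have ix : (index e s < n)%N by rewrite -size_s index_mem.
pose j := Ordinal ix; have ej : nth [::] s j = e by rewrite nth_index.
rewrite (bigD1 j) //= ej eqxx mulr1 big1 ?addr0 // => i ij.
by case: eqP => [|_]; [rewrite -ej => /mono_nth_inj eq; rewrite eq eqxx in ij | rewrite mulr0].
Qed.

End MonomialBasis.

Lemma homog_iter_Lop (C : numClosedFieldType) w b n i (v : M1 C) :
  homog w b v -> homog (w - n * i%:Z) b (iter i (Lop n) v).
Proof.
elim: i => [|i IH] hv0; first by rewrite mulr0 subr0.
rewrite iterS (_ : _ - _ = w - n * i%:Z - n); first exact: homog_Lop (IH hv0).
by rewrite intS mulrDr mulr1 opprD addrA addrAC.
Qed.

Lemma gens10_inMplus (C : numClosedFieldType) (v : M1 C) :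
  gens10 v -> inMplus 10 v.
Proof.
case=> [[w [/inMplus_homog hw ->]]|[[w [/inMplus_homog hw ->]]|[->|->]]];
  apply/inMplus_homog.
- by have := homog_Lop (n := -1) hw; rewrite (_ : 9%:Z - (-1) = 10%:Z).
- by have := homog_Lop (n := -3) hw; rewrite (_ : 7%:Z - (-3) = 10%:Z).
- have := homog_Ymono (ns := [:: 1%N; 1%N; 1%N; 1%N]) (n := -3) (@homogU C (mono [:: 4%N])).
  by rewrite h1pow4E wtm_mono lenm_mono.
- exact: (homog_iter_Lop (n := -2) (i := 5) (@homog_vac C)).
Qed.

Lemma in_span_mono10 (C : numClosedFieldType) e :
  e \in even_exps 10 -> in_span (@gens10 C) << mono e >>.
Proof.
pose r0 := CertRow 0 [::] [::] [::] 0 0.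
move=> /(allP certificate_covers) /(has_nthP r0) [i lti /eqP <-].
exact: spanned_cert_row (all_nthP r0 certificate_rows_ok i lti).
Qed.

Theorem lemma4p3 (C : numClosedFieldType) :
  (exists b : 'I_22 -> M1 C,
      (forall i, @inMplus C 10 (b i)) /\
      (forall c : 'I_22 -> C, \sum_i c i *: b i = 0 -> forall i, c i = 0) /\
      (forall v, @inMplus C 10 v -> exists c : 'I_22 -> C, v = \sum_i c i *: b i)) /\
  (forall v, @gens10 C v -> @inMplus C 10 v) /\
  (forall v, @inMplus C 10 v -> in_span (@gens10 C) v).
Proof.
have /and3P[/eqP size10 uniq10 /allP plus10] := even_exps10.
have canon10 : all (fun e => last 1%N e != 0%N) (even_exps 10).
  by apply/allP => e /plus10 /and3P[].
have span10 v hv := mono_family_span size10 uniq10 canon10 (@msupp_inMplus C 10 v hv).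
split; last split; first exists (mono_family C (even_exps 10)).
- split=> [i|]; first by apply/inMplus_mono/plus10/mem_nth; rewrite size10.
  split=> [c|v hv]; first exact: (mono_family_free size10 uniq10 canon10 (c := c)).
  by exists (fun i => v@_(mono (nth [::] (even_exps 10) i))); exact: span10 hv.
- exact: gens10_inMplus.
- move=> v hv; rewrite (span10 v hv); apply: in_span_sum => i _.
  by apply/in_spanZ/in_span_mono10/mem_nth; rewrite size10.
Qed.
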